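(* Prioritized planning is suboptimal for the makespan objective in general for the class of P-solvable MAPF instances: there exists a P-solvable MAPF instance such that, for every priority ordering $\prec$, every solution consistent with $\prec$ has makespan strictly greater than the minimum makespan over all solutions of the instance.
   Context: A MAPF instance consists of a connected undirected graph $G=(V,E)$ and $M$ agents $a_1,\dots,a_M$; agent $a_i$ has a start vertex $s_i$ and a target vertex $t_i$, and start vertices are pairwise distinct, as are target vertices. Time is discrete; at each time step every agent either moves to an adjacent vertex or waits. A path for $a_i$ is a sequence $\pi_i=\langle \pi_i(0),\pi_i(1),\dots\rangle$ with $\pi_i(0)=s_i$, consecutive vertices equal or adjacent, and $\pi_i(t)=t_i$ for all $t\ge T_i$, where the arrival time $T_i$ is the least such time. Two agents collide if they occupy the same vertex at the same time, or traverse the same edge in opposite directions at the same time step. A solution is a collision-free set of paths, one per agent; its makespan is $\max_i T_i$. A priority ordering is a strict partial order $\prec$ on $\{1,\dots,M\}$ ($a_i$ has higher priority than $a_j$ iff $i\prec j$). A solution $\{\pi_i\}$ is consistent with $\prec$ if for every $i$ the arrival time of $\pi_i$ equals the minimum arrival time over all paths for $a_i$ that do not collide with any $\pi_k$ with $k\prec i$ (higher priority agents never wait for lower priority agents). A MAPF instance is P-solvable iff it has a solution consistent with some priority ordering. *)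

From mathcomp Require Import all_boot.
Unset Printing Implicit Defensive.

Record inst := Inst {
  iV : finType;
  iadj : rel iV;
  iM : nat;
  isrc : 'I_iM -> iV;
  itgt : 'I_iM -> iV }.

Definition well_formed (I : inst) : Prop :=
  symmetric (iadj I) /\ irreflexive (iadj I) /\
  (forall x y : iV I, connect (iadj I) x y) /\
  injective (isrc I) /\ injective (itgt I).

Definition settled (V : Type) (p : nat -> V) (v : V) (T : nat) : Prop :=
  forall t, T <= t -> p t = v.

Definition is_path (I : inst) (i : 'I_(iM I)) (p : nat -> iV I) : Prop :=
  p 0 = isrc I i /\
  (forall t, p t.+1 = p t \/ iadj I (p t) (p t.+1)) /\
  (exists T, @settled _ p (itgt I i) T).

Definition arrival (V : Type) (p : nat -> V) (v : V) (T : nat) : Prop :=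
  @settled V p v T /\ forall T', @settled V p v T' -> T <= T'.

Definition collide (V : Type) (p q : nat -> V) : Prop :=
  exists t, p t = q t \/ (p t = q t.+1 /\ p t.+1 = q t).

Definition solution (I : inst) (pi : 'I_(iM I) -> nat -> iV I) : Prop :=
  (forall i, is_path I i (pi i)) /\
  (forall i j, i != j -> ~ @collide _ (pi i) (pi j)).

Definition makespan (I : inst) (pi : 'I_(iM I) -> nat -> iV I) (m : nat) : Prop :=
  exists T : 'I_(iM I) -> nat,
    (forall i, @arrival _ (pi i) (itgt I i) (T i)) /\ m = \max_(i < iM I) T i.

Definition min_makespan (I : inst) (m : nat) : Prop :=
  (exists pi, solution I pi /\ makespan I pi m) /\
  (forall pi m', solution I pi -> makespan I pi m' -> m <= m').

(* strict partial order; k ≺ i means a_k has higher priority than a_i *)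
Definition priority_ordering (M : nat) (prec : rel 'I_M) : Prop :=
  irreflexive prec /\ transitive prec.

Definition consistent (I : inst) (prec : rel 'I_(iM I))
  (pi : 'I_(iM I) -> nat -> iV I) : Prop :=
  solution I pi /\
  forall i T, @arrival _ (pi i) (itgt I i) T ->
    forall p T', is_path I i p ->
      (forall k, prec k i -> ~ @collide _ p (pi k)) ->
      @arrival _ p (itgt I i) T' -> T <= T'.

Definition P_solvable (I : inst) : Prop :=
  exists prec : rel 'I_(iM I), @priority_ordering (iM I) prec /\ exists pi, consistent I prec pi.

From mathcomp Require Import all_boot.

(* Take the tree with edges 0-1, 0-2, 0-3, 1-4, 1-5, agent A going from 0 to 4
   and agent B from 4 to 2.  The agents must cross on the path 4-1-0-2, using
   one of the leaves 3 and 5 as a passing place.  Makespan 4 is achievable: A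
   steps aside into 5 while B, after waiting one step, walks down.  Under any
   priority ordering some agent has no predecessor, so it must arrive as early as
   it could alone (A at time 2, B at time 3); then the other agent cannot finish
   by time 4.  Both impossibilities are finite: they are decided by enumerating
   the joint positions of the two agents reachable in the first four steps. *)

#[local] Arguments settled {V} p v T.
#[local] Arguments arrival {V} p v T.
#[local] Arguments collide {V} p q.

Section Schedules.
Context {V : eqType} (adj : rel V).

Definition moves : rel V := fun x y => (y == x) || adj x y.

Lemma movesP x y : reflect (y = x \/ adj x y) (moves x y).
Proof. by apply: (iffP orP) => -[/eqP ->|]; rewrite ?eqxx; auto. Qed.

Lemma settled_monotone {p : nat -> V} {v : V} {T T' : nat} :
  settled p v T -> T <= T' -> settled p v T'.
Proof. by move=> pT le t le'; apply: pT; apply: leq_trans le'. Qed.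

Lemma arrival_unique (p : nat -> V) v T1 T2 :
  arrival p v T1 -> arrival p v T2 -> T1 = T2.
Proof. by move=> [S1 min1] [S2 min2]; apply/eqP; rewrite eqn_leq min1 ?min2. Qed.

Lemma settled_arrival (p : nat -> V) v T :
  settled p v T -> p T.-1 != v -> arrival p v T.
Proof.
move=> pT pT1; split=> // T' pT'; rewrite leqNgt; apply: contra pT1 => lt.
by apply/eqP; apply: pT'; rewrite -ltnS (ltn_predK lt).
Qed.

Definition traj (x : V) (l : seq V) (t : nat) : V := nth (last x l) (x :: l) t.

Lemma traj_settled x l : settled (traj x l) (last x l) (size l).
Proof.
move=> t; rewrite leq_eqVlt => /orP[/eqP<- | lt]; first exact: nth_last.
by rewrite /traj nth_default.
Qed.

Lemma traj_arrival x l :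
  traj x l (size l).-1 != last x l -> arrival (traj x l) (last x l) (size l).
Proof. exact: settled_arrival (traj_settled x l). Qed.

Lemma traj_moves x l : path moves x l -> forall t, moves (traj x l t) (traj x l t.+1).
Proof.
move=> /(pathP x) step t; have [lt | ge] := ltnP t (size l).
  by have := step t lt; rewrite /traj !(set_nth_default x) //= ltnW.
by have S := traj_settled x l; rewrite !S ?leqW //; apply/movesP; left.
Qed.

Definition conflict (x y x' y' : V) := (x == y) || (x == y') && (x' == y).

Lemma collide_sym (p q : nat -> V) : collide p q -> collide q p.
Proof. by move=> [t [pq | [pq pq']]]; exists t; [left | right]. Qed.

Lemma settled_no_collide (p q : nat -> V) a b N :
  settled p a N -> settled q b N ->
  ~~ has (fun t => conflict (p t) (q t) (p t.+1) (q t.+1)) (iota 0 N.+1) ->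
  ~ collide p q.
Proof.
move=> pN qN /hasPn free [t coll].
have conflict_t : conflict (p t) (q t) (p t.+1) (q t.+1).
  by rewrite /conflict; case: coll => [-> | [-> ->]]; rewrite !eqxx ?orbT.
have [tN | Nt] := leqP t N.
  by move/(_ t): free; rewrite mem_iota add0n ltnS tN conflict_t => /(_ isT).
(* Past [N] both paths are frozen, so a conflict at [t > N] is one at [N]. *)
have Nt' : N <= t by apply: ltnW.
have Nt1 : N <= t.+1 by apply: leqW.
move/(_ N): free; rewrite mem_iota add0n ltnS leqnn /conflict in conflict_t *.
by rewrite !pN ?qN // in conflict_t *; rewrite conflict_t => /(_ isT).
Qed.

Lemma traj_no_collide x l y m (N := maxn (size l) (size m)) :
  ~~ has (fun t => conflict (traj x l t) (traj y m t) (traj x l t.+1) (traj y m t.+1))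
         (iota 0 N.+1) ->
  ~ collide (traj x l) (traj y m).
Proof.
apply: settled_no_collide.
  exact: settled_monotone (traj_settled x l) (leq_maxl _ _).
exact: settled_monotone (traj_settled y m) (leq_maxr _ _).
Qed.

End Schedules.

Section BoundedReachability.
Context {S : eqType} (states : seq S) (e : rel S) (allowed : nat -> pred S).
Hypothesis states_complete : forall s, s \in states.

Fixpoint reachable (s : S) (t : nat) : seq S :=
  if t is t'.+1 then
    (* The [let] makes call-by-value evaluation compute the previous layer once. *)
    let R := reachable s t' in [seq y <- states | allowed t y && has (e^~ y) R]
  else [:: s].

Lemma reachable_trajectory (p : nat -> S) :
  (forall t, e (p t) (p t.+1)) -> (forall t, allowed t (p t)) ->
  forall t, p t \in reachable (p 0) t.
Proof.
move=> step ok; elim=> [|t IH]; first exact: mem_head.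
rewrite mem_filter states_complete ok andbT /=; apply/hasP; exists (p t) => //.
Qed.

End BoundedReachability.

Arguments reachable_trajectory {S states e allowed}.

Section JointSchedules.
Context {V : eqType} (verts : seq V) (adj : rel V).
Hypothesis verts_complete : forall x, x \in verts.

Definition joint_moves : rel (V * V) := fun r s =>
  [&& moves adj r.1 s.1, moves adj r.2 s.2 & ~~ conflict r.1 r.2 s.1 s.2].

Definition deadlines (a b : V) (Ta Tb t : nat) (s : V * V) : bool :=
  ((Ta <= t) ==> (s.1 == a)) && ((Tb <= t) ==> (s.2 == b)).

Lemma joint_reachable (p q : nat -> V) a b Ta Tb :
  (forall t, moves adj (p t) (p t.+1)) -> (forall t, moves adj (q t) (q t.+1)) ->
  ~ collide p q -> settled p a Ta -> settled q b Tb ->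
  forall t, (p t, q t) \in reachable [seq (x, y) | x <- verts, y <- verts]
                             joint_moves (deadlines a b Ta Tb) (p 0, q 0) t.
Proof.
move=> p_moves q_moves pq_free pTa qTb.
have pairs_complete (s : V * V) : s \in [seq (x, y) | x <- verts, y <- verts].
  by case: s => x y; apply: allpairs_f.
apply: (reachable_trajectory pairs_complete (fun t => (p t, q t))) => t.
  rewrite /joint_moves /= p_moves q_moves; apply/negP => conflict_t.
  apply: pq_free; exists t.
  by case/orP: conflict_t => [/eqP | /andP[/eqP ? /eqP ?]]; auto.
by apply/andP; split; apply/implyP => le; apply/eqP; [apply: pTa | apply: qTb].
Qed.

End JointSchedules.

Arguments joint_reachable {V verts adj} verts_complete {p q a b Ta Tb}.

Lemma is_pathP (I : inst) (i : 'I_(iM I)) (p : nat -> iV I) :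
  is_path I i p <->
  [/\ p 0 = isrc I i, forall t, moves (iadj I) (p t) (p t.+1)
    & exists T, settled p (itgt I i) T].
Proof.
split=> [[p0 [step fin]] | [p0 step fin]].
  by split=> // t; apply/movesP; apply: step.
by split=> //; split=> // t; apply/movesP.
Qed.

Lemma traj_is_path (I : inst) (i : 'I_(iM I)) (l : seq (iV I)) :
  path (moves (iadj I)) (isrc I i) l -> last (isrc I i) l = itgt I i ->
  is_path I i (traj (isrc I i) l).
Proof.
move=> l_path l_last; apply/is_pathP; split=> //; first exact: traj_moves.
by exists (size l); rewrite -l_last; apply: traj_settled.
Qed.

Lemma exists_top_priority {M : nat} {prec : rel 'I_M} (i0 : 'I_M) :
  priority_ordering M prec -> exists i, forall k, ~~ prec k i.
Proof.
move=> [prec_irr prec_trans].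
have [i _ i_min] := arg_minnP (fun i => #|[pred k | prec k i]|) (erefl (predT i0)).
exists i => k; apply/negP => ki.
have : #|[pred j | prec j k]| < #|[pred j | prec j i]|.
  apply: proper_card; apply/properP; split; last by exists k; rewrite inE ?prec_irr.
  by apply/subsetP => j; rewrite !inE => /prec_trans; apply.
by rewrite ltnNge i_min.
Qed.

Lemma consistent_top_arrival (I : inst) prec pi (i : 'I_(iM I)) T p T' :
  consistent I prec pi -> (forall k, ~~ prec k i) ->
  arrival (pi i) (itgt I i) T -> is_path I i p -> arrival p (itgt I i) T' -> T <= T'.
Proof.
move=> [_ cons] top piT p_path pT'; apply: (cons i T piT p T' p_path _ pT') => k.
by rewrite (negbTE (top k)).
Qed.

Definition v0 : 'I_6 := @Ordinal 6 0 isT.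
Definition v1 : 'I_6 := @Ordinal 6 1 isT.
Definition v2 : 'I_6 := @Ordinal 6 2 isT.
Definition v3 : 'I_6 := @Ordinal 6 3 isT.
Definition v4 : 'I_6 := @Ordinal 6 4 isT.
Definition v5 : 'I_6 := @Ordinal 6 5 isT.

Definition tree_edges : seq (nat * nat) := [:: (0, 1); (0, 2); (0, 3); (1, 4); (1, 5)].

Definition tree_adj : rel 'I_6 :=
  fun x y => ((x : nat, y : nat) \in tree_edges) || ((y : nat, x : nat) \in tree_edges).

Definition tree_verts : seq 'I_6 := [:: v0; v1; v2; v3; v4; v5].

Lemma mem_tree_verts x : x \in tree_verts.
Proof. by case: x => [[|[|[|[|[|[|]]]]]]]. Qed.

Definition agentA : 'I_2 := ord0.
Definition agentB : 'I_2 := ord_max.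

Definition tree_inst : inst :=
  @Inst 'I_6 tree_adj 2 (tnth [tuple v0; v4]) (tnth [tuple v4; v2]).

Lemma agent_cases (i : 'I_2) : i = agentA \/ i = agentB.
Proof. by case: i => [[|[|//]] lt]; [left | right]; apply: val_inj. Qed.

Lemma tree_connected x : connect tree_adj x v0.
Proof.
have : [|| x == v0, tree_adj x v0 | tree_adj x v1] by case: x => [[|[|[|[|[|[|]]]]]]].
case/or3P=> [/eqP-> // | x0 | x1]; first exact: connect1.
by apply: connect_trans (connect1 x1) (connect1 (isT : tree_adj v1 v0)).
Qed.

Lemma tree_well_formed : well_formed tree_inst.
Proof.
have adj_sym : symmetric tree_adj by move=> x y; rewrite /tree_adj orbC.
split=> //; split; first by case=> [[|[|[|[|[|[|]]]]]]].
split.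
  move=> x y; apply: connect_trans (tree_connected x) _.
  by rewrite (sym_connect_sym adj_sym) tree_connected.
by split=> i j; case: (agent_cases i) => ->; case: (agent_cases j) => ->.
Qed.

Definition tree_joint_reachable Ta Tb :=
  reachable [seq (x, y) | x <- tree_verts, y <- tree_verts] (joint_moves tree_adj)
            (deadlines v4 v2 Ta Tb) (v0, v4) (maxn Ta Tb).

Lemma tree_unreachable_2_4 : tree_joint_reachable 2 4 = [::].
Proof. by vm_compute. Qed.

Lemma tree_unreachable_4_3 : tree_joint_reachable 4 3 = [::].
Proof. by vm_compute. Qed.

Lemma tree_no_schedule {Ta Tb Ta' Tb' : nat} {p q : nat -> 'I_6} :
  tree_joint_reachable Ta Tb = [::] ->
  is_path tree_inst agentA p -> is_path tree_inst agentB q -> ~ collide p q ->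
  settled p v4 Ta' -> settled q v2 Tb' -> Ta' <= Ta -> Tb' <= Tb -> False.
Proof.
move=> unreachable /is_pathP[p0 p_moves _] /is_pathP[q0 q_moves _] pq_free.
move=> pTa qTb leTa leTb.
have := joint_reachable mem_tree_verts p_moves q_moves pq_free
          (settled_monotone pTa leTa) (settled_monotone qTb leTb) (maxn Ta Tb).
by rewrite p0 q0 -/(tree_joint_reachable Ta Tb) unreachable.
Qed.

Lemma tree_agentB_settled_ge3 {q : nat -> 'I_6} {T : nat} :
  is_path tree_inst agentB q -> settled q v2 T -> 3 <= T.
Proof.
move=> /is_pathP[q0 q_moves _] qT; rewrite leqNgt; apply/negP => T2.
have := reachable_trajectory (allowed := fun _ _ => true)
          mem_tree_verts q q_moves (fun _ => isT) 2.
by rewrite q0 (qT 2 T2).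
Qed.

Definition shortA := traj v0 [:: v1; v4].
Definition shortB := traj v4 [:: v1; v0; v2].
Definition yieldA := traj v0 [:: v3; v3; v0; v1; v4].
Definition dodgeA := traj v0 [:: v1; v5; v1; v4].
Definition delayB := traj v4 [:: v4; v1; v0; v2].

Lemma shortA_path : is_path tree_inst agentA shortA. Proof. exact: traj_is_path. Qed.
Lemma shortB_path : is_path tree_inst agentB shortB. Proof. exact: traj_is_path. Qed.

Lemma yieldA_path : is_path tree_inst agentA yieldA. Proof. exact: traj_is_path. Qed.

Lemma shortA_arrival : arrival shortA v4 2. Proof. exact: traj_arrival. Qed.
Lemma shortB_arrival : arrival shortB v2 3. Proof. exact: traj_arrival. Qed.
Lemma yieldA_arrival : arrival yieldA v4 5. Proof. exact: traj_arrival. Qed.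

Lemma tree_solution {pa pb : nat -> 'I_6} :
  is_path tree_inst agentA pa -> is_path tree_inst agentB pb -> ~ collide pa pb ->
  solution tree_inst (tnth [tuple pa; pb]).
Proof.
move=> pa_path pb_path pab_free; split=> [i | i j].
  by case: (agent_cases i) => ->.
by case: (agent_cases i) => ->; case: (agent_cases j) => -> //= _ /collide_sym.
Qed.

Definition B_before_A : rel 'I_2 := fun i j => (i == agentB) && (j == agentA).

Lemma tree_P_solvable : P_solvable tree_inst.
Proof.
exists B_before_A; split.
  split; first by move=> i; rewrite /B_before_A; case: eqP => // ->.
  by move=> j i k /andP[_ /eqP->] /andP[/eqP].
exists (tnth [tuple yieldA; shortB]); split.
  by apply: (tree_solution yieldA_path shortB_path); apply: traj_no_collide.
move=> i T iT p T' p_path p_free pT'.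
case: (agent_cases i) => Ei; subst i.
- have -> : T = 5 by exact: arrival_unique iT yieldA_arrival.
  rewrite leqNgt; apply/negP => T'4.
  exact: tree_no_schedule tree_unreachable_4_3 p_path shortB_path (p_free agentB isT)
           pT'.1 shortB_arrival.1 T'4 isT.
- have -> : T = 3 by exact: arrival_unique iT shortB_arrival.
  exact: tree_agentB_settled_ge3 p_path pT'.1.
Qed.

Lemma tree_min_makespan_le {m : nat} : min_makespan tree_inst m -> m <= 4.
Proof.
move=> [_ m_min]; apply: (m_min (tnth [tuple dodgeA; delayB])).
  by apply: tree_solution;
    [apply: traj_is_path | apply: traj_is_path | apply: traj_no_collide].
exists (fun=> 4); split; last by rewrite big_const_ord.
by move=> i; case: (agent_cases i) => ->; apply: traj_arrival.
Qed.

Lemma tree_prioritized_makespan_gt {prec pi} {ms : nat} :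
  priority_ordering 2 prec -> consistent tree_inst prec pi ->
  makespan tree_inst pi ms -> 4 < ms.
Proof.
move=> prec_order pi_cons [T [piT ->]].
have [i top] := exists_top_priority agentA prec_order.
have [[pi_paths pi_free] _] := pi_cons.
have pi_coll := pi_free agentA agentB isT.
have Tle i' : T i' <= \max_(j < 2) T j by apply: leq_bigmax.
rewrite ltnNge; apply/negP => ms4.
case: (agent_cases i) => Ei; subst i.
- have TA2 : T agentA <= 2.
    exact: consistent_top_arrival pi_cons top (piT agentA) shortA_path shortA_arrival.
  exact: tree_no_schedule tree_unreachable_2_4 (pi_paths agentA) (pi_paths agentB) pi_coll
           (piT agentA).1 (piT agentB).1 TA2 (leq_trans (Tle agentB) ms4).
- have TB3 : T agentB <= 3.
    exact: consistent_top_arrival pi_cons top (piT agentB) shortB_path shortB_arrival.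
  exact: tree_no_schedule tree_unreachable_4_3 (pi_paths agentA) (pi_paths agentB) pi_coll
           (piT agentA).1 (piT agentB).1 (leq_trans (Tle agentA) ms4) TB3.
Qed.

Theorem corollary1 :
  exists I : inst,
    well_formed I /\ P_solvable I /\
    forall prec : rel 'I_(iM I), @priority_ordering (iM I) prec ->
      forall pi, consistent I prec pi ->
        forall m ms, min_makespan I m -> makespan I pi ms -> m < ms.
Proof.
exists tree_inst; split; first exact: tree_well_formed.
split; first exact: tree_P_solvable.
move=> prec prec_order pi pi_cons m ms m_min pi_ms.
exact: leq_ltn_trans (tree_min_makespan_le m_min)
                     (tree_prioritized_makespan_gt prec_order pi_cons pi_ms).
Qed.
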